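(* Let $i_1$ be the largest index $i\in[1,n]$ with $d_P(v_1,v_i)<d_P(v_i,v_n)$ and let $i_2$ be the smallest index $i\in[1,n]$ with $d_P(v_1,v_i)\ge|v_iv_n|$, and suppose $i_2\le i_1$. For each $i\in[i_2,i_1]$ let $j(i)$ be the smallest index $j\in[i,n]$ with $d_P(v_1,v_i)\ge |v_iv_j|+d_P(v_j,v_n)$ (this exists), and let $k(i)$ be the largest index $k\in[i,j(i)]$ with $d_P(v_1,v_i)<|v_iv_{j(i)}|+d_P(v_{j(i)},v_k)$, with $k(i)=0$ if no such $k$ exists. Then for every $i\in[i_2,i_1-1]$, $j(i+1)\le j(i)$ and $k(i+1)\le k(i)$.
   Context: Let $v_1,\dots,v_n$ be points of a metric space with metric $|\cdot|$ (symmetric, nonnegative, $|v_iv_j|=0$ iff $i=j$, triangle inequality). For $i\le j$ let $d_P(v_i,v_j)=\sum_{k=i}^{j-1}|v_kv_{k+1}|$ and $d_P(v_j,v_i)=d_P(v_i,v_j)$. *)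

From Stdlib Require Import Reals Lra Lia Arith.
Open Scope R_scope.

Fixpoint seg (f : nat -> R) (i m : nat) : R :=
  match m with
  | O => 0
  | S m' => f i + seg f (S i) m'
  end.

Definition is_metric {X : Type} (dist : X -> X -> R) : Prop :=
  (forall x y, 0 <= dist x y) /\
  (forall x y, dist x y = dist y x) /\
  (forall x y, dist x y = 0 <-> x = y) /\
  (forall x y z, dist x z <= dist x y + dist y z).

Definition dP {X : Type} (dist : X -> X -> R) (v : nat -> X) (i j : nat) : R :=
  if (i <=? j)%nat
  then seg (fun k => dist (v k) (v (S k))) i (j - i)
  else seg (fun k => dist (v k) (v (S k))) j (i - j).

Definition Jprop {X : Type} (dist : X -> X -> R) (v : nat -> X) (n i j : nat) : Prop :=
  dP dist v 1 i >= dist (v i) (v j) + dP dist v j n.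

Definition IsJ {X : Type} (dist : X -> X -> R) (v : nat -> X) (n i j : nat) : Prop :=
  (i <= j <= n)%nat /\ Jprop dist v n i j /\
  (forall j', (i <= j' <= n)%nat -> Jprop dist v n i j' -> (j <= j')%nat).

Definition Kprop {X : Type} (dist : X -> X -> R) (v : nat -> X) (i j k : nat) : Prop :=
  dP dist v 1 i < dist (v i) (v j) + dP dist v j k.

Definition IsK {X : Type} (dist : X -> X -> R) (v : nat -> X) (i j k : nat) : Prop :=
  ((i <= k <= j)%nat /\ Kprop dist v i j k /\
   (forall k', (i <= k' <= j)%nat -> Kprop dist v i j k' -> (k' <= k)%nat))
  \/
  (k = 0%nat /\ (forall k', (i <= k' <= j)%nat -> ~ Kprop dist v i j k')).

From Stdlib Require Import Reals Lra Lia Arith Classical Wf_nat.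
Open Scope R_scope.

(* Write P(m) = |v_0v_1| + ... + |v_{m-1}v_m| for the prefix
   lengths of the path, so that d_P(v_a,v_b) = P(b) - P(a) for a <= b and every
   chord |v_av_b| is at most P(b) - P(a) (triangle inequality).  Then:
   - j(i) exists for i >= i2: the index n qualifies, since
     d_P(v_1,v_i) >= d_P(v_1,v_{i2}) + d_P(v_{i2},v_i) >= |v_{i2}v_n| + |v_{i2}v_i|;
   - j(i) > i for i <= i1, by monotonicity of P and the defining property of i1;
   - the J-condition passes from (i, j) to (i+1, j) when j > i, because
     d_P(v_1,v_{i+1}) grows by |v_iv_{i+1}| while |v_{i+1}v_j| grows by at most
     that much; minimality of j(i+1) gives j(i+1) <= j(i);
   - dually the K-condition passes from (i+1, j(i+1), k) back to (i, j(i), k)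
     once j(i+1) <= j(i), so maximality of k(i) gives k(i+1) <= k(i). *)

Lemma seg_split (f : nat -> R) (i a b : nat) :
  seg f i (a + b) = seg f i a + seg f (i + a) b.
Proof.
  revert i; induction a as [|a IH]; intros i; simpl.
  - rewrite Nat.add_0_r; lra.
  - rewrite IH. replace (i + S a)%nat with (S i + a)%nat by lia. lra.
Qed.

Lemma least_index (P : nat -> Prop) (N : nat) :
  P N -> exists m, P m /\ forall m', P m' -> (m <= m')%nat.
Proof.
  intros HN.
  destruct (dec_inh_nat_subset_has_unique_least_element P)
    as [m [[Pm Hm] _]]; eauto using classic.
Qed.

Section PathInMetricSpace.

Variable X : Type.
Variable dist : X -> X -> R.
Variable v : nat -> X.
Hypothesis Hmetric : is_metric dist.

Definition prefix (m : nat) : R := seg (fun k => dist (v k) (v (S k))) 0 m.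

Lemma prefix_succ (m : nat) : prefix (S m) = prefix m + dist (v m) (v (S m)).
Proof.
  unfold prefix. pose proof (seg_split (fun k => dist (v k) (v (S k))) 0 m 1) as E.
  simpl in E. replace (m + 1)%nat with (S m) in E by lia. lra.
Qed.

Lemma dP_prefix (a b : nat) : (a <= b)%nat ->
  dP dist v a b = prefix b - prefix a /\ dP dist v b a = prefix b - prefix a.
Proof.
  intros Hab. unfold dP, prefix.
  pose proof (seg_split (fun k => dist (v k) (v (S k))) 0 a (b - a)) as E.
  simpl in E. replace (a + (b - a))%nat with b in E by lia.
  destruct (Nat.leb_spec a b) as [_|]; [|lia].
  destruct (Nat.leb_spec b a).
  - assert (a = b) by lia; subst. rewrite Nat.sub_diag. simpl. lra.
  - lra.
Qed.

Lemma prefix_mono (a b : nat) : (a <= b)%nat -> prefix a <= prefix b.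
Proof.
  intros H; induction H; [lra|]. rewrite prefix_succ.
  pose proof (proj1 Hmetric (v m) (v (S m))). lra.
Qed.

Lemma chord_le_path (a b : nat) : (a <= b)%nat ->
  dist (v a) (v b) <= prefix b - prefix a.
Proof.
  destruct Hmetric as [_ [_ [Hz Htri]]].
  intros H; induction H.
  - rewrite (proj2 (Hz (v a) (v a)) eq_refl). lra.
  - rewrite prefix_succ. pose proof (Htri (v a) (v m) (v (S m))). lra.
Qed.

Variable n : nat.

Lemma Jprop_at_end (i2 i : nat) :
  (1 <= i2 <= i)%nat -> (i <= n)%nat ->
  dP dist v 1 i2 >= dist (v i2) (v n) -> Jprop dist v n i n.
Proof.
  destruct Hmetric as [_ [Hsym [_ Htri]]]. intros Hi Hin Hi2. unfold Jprop.
  destruct (dP_prefix 1 i) as [-> _]; [lia|].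
  destruct (dP_prefix 1 i2) as [E _]; [lia|]. rewrite E in Hi2.
  destruct (dP_prefix n n) as [-> _]; [lia|].
  pose proof (Htri (v i) (v i2) (v n)). rewrite (Hsym (v i) (v i2)) in H.
  pose proof (chord_le_path i2 i ltac:(lia)). lra.
Qed.

Lemma Jprop_not_self (i1 i : nat) :
  (1 <= i <= i1)%nat -> (i1 <= n)%nat ->
  dP dist v 1 i1 < dP dist v i1 n -> ~ Jprop dist v n i i.
Proof.
  destruct Hmetric as [_ [_ [Hz _]]]. intros Hi Hi1n Hi1 HJ. unfold Jprop in HJ.
  rewrite (proj2 (Hz (v i) (v i)) eq_refl) in HJ.
  destruct (dP_prefix 1 i) as [E1 _]; [lia|]. destruct (dP_prefix i n) as [E2 _]; [lia|].
  destruct (dP_prefix 1 i1) as [E3 _]; [lia|]. destruct (dP_prefix i1 n) as [E4 _]; [lia|].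
  rewrite E1, E2 in HJ. rewrite E3, E4 in Hi1.
  pose proof (prefix_mono i i1 ltac:(lia)). lra.
Qed.

Lemma Jprop_step (i j : nat) :
  (1 <= i)%nat -> Jprop dist v n i j -> Jprop dist v n (S i) j.
Proof.
  destruct Hmetric as [_ [Hsym [_ Htri]]]. intros Hi. unfold Jprop.
  destruct (dP_prefix 1 i) as [-> _]; [lia|].
  destruct (dP_prefix 1 (S i)) as [-> _]; [lia|].
  rewrite (prefix_succ i). intros HJ.
  pose proof (Htri (v (S i)) (v i) (v j)). rewrite (Hsym (v (S i)) (v i)) in H. lra.
Qed.

Lemma Kprop_step (i j1 j2 k : nat) :
  (1 <= i)%nat -> (k <= j2 <= j1)%nat ->
  Kprop dist v (S i) j2 k -> Kprop dist v i j1 k.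
Proof.
  destruct Hmetric as [_ [Hsym [_ Htri]]]. intros Hi Hk. unfold Kprop.
  destruct (dP_prefix 1 i) as [-> _]; [lia|].
  destruct (dP_prefix 1 (S i)) as [-> _]; [lia|].
  destruct (dP_prefix k j2) as [_ ->]; [lia|].
  destruct (dP_prefix k j1) as [_ ->]; [lia|].
  rewrite (prefix_succ i). intros HK.
  pose proof (Htri (v (S i)) (v i) (v j2)). rewrite (Hsym (v (S i)) (v i)) in H.
  pose proof (Htri (v i) (v j1) (v j2)). rewrite (Hsym (v j1) (v j2)) in H0.
  pose proof (chord_le_path j2 j1 ltac:(lia)). lra.
Qed.

End PathInMetricSpace.

Theorem lemma10 (X : Type) (dist : X -> X -> R) (n : nat) (v : nat -> X)
  (Hmetric : is_metric dist)
  (Hdistinct : forall i j, (1 <= i <= n)%nat -> (1 <= j <= n)%nat ->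
                 (dist (v i) (v j) = 0 <-> i = j))
  (i1 i2 : nat)
  (Hi1 : (1 <= i1 <= n)%nat /\ dP dist v 1 i1 < dP dist v i1 n /\
         (forall i, (1 <= i <= n)%nat -> dP dist v 1 i < dP dist v i n -> (i <= i1)%nat))
  (Hi2 : (1 <= i2 <= n)%nat /\ dP dist v 1 i2 >= dist (v i2) (v n) /\
         (forall i, (1 <= i <= n)%nat -> dP dist v 1 i >= dist (v i) (v n) -> (i2 <= i)%nat))
  (H21 : (i2 <= i1)%nat) :
  (forall i, (i2 <= i <= i1)%nat -> exists j, IsJ dist v n i j) /\
  (forall i, (i2 <= i <= i1 - 1)%nat ->
     forall j1 j2 k1 k2,
       IsJ dist v n i j1 -> IsJ dist v n (S i) j2 ->
       IsK dist v i j1 k1 -> IsK dist v (S i) j2 k2 ->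
       (j2 <= j1)%nat /\ (k2 <= k1)%nat).
Proof.
  destruct Hi1 as [Hi1r [Hi1p _]]. destruct Hi2 as [Hi2r [Hi2p _]].
  split.
  - intros i Hi.
    destruct (least_index (fun j => (i <= j <= n)%nat /\ Jprop dist v n i j) n)
      as [j [[Hjr Hjp] Hjmin]].
    + split; [lia|]. apply (Jprop_at_end X dist v Hmetric n i2); auto; lia.
    + exists j. repeat split; auto; lia.
  - intros i Hi j1 j2 k1 k2 [Hj1r [Hj1p _]] [Hj2r [_ Hj2min]] HK1 HK2.
    assert (Hj1i : j1 <> i).
    { intros ->. exact (Jprop_not_self X dist v Hmetric n i1 i ltac:(lia) ltac:(lia) Hi1p Hj1p). }
    assert (Hj : (j2 <= j1)%nat).
    { apply Hj2min; [lia|]. apply Jprop_step; auto; lia. }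
    split; [exact Hj|].
    destruct HK2 as [[Hk2r [Hk2p _]] | [-> _]]; [|lia].
    assert (HK : Kprop dist v i j1 k2) by (apply (Kprop_step X dist v Hmetric i j1 j2); auto; lia).
    destruct HK1 as [[_ [_ Hk1max]] | [_ Hnone]].
    + apply Hk1max; auto; lia.
    + exfalso. apply (Hnone k2); auto; lia.
Qed.
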